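(* Let $\widehat{\mathbf M}\otimes\mathcal A_\psi$ be the product of a gMDP $\widehat{\mathbf M}$ (state space $\hat{\mathbb X}$, input space $\hat{\mathbb U}$) with the DFA $\mathcal A_\psi=(Q,q_0,\Sigma,F,\tau)$, let $\delta\ge 0$, let $\mu$ be a stationary Markov policy, and let $I$ be an absorbing set for $\mu$. Then every function $V:\hat{\mathbb X}\times Q\to[0,1]$ satisfies, for all integers $l\ge1$, $$0\le(\mathbf T^\mu_\delta)^l(V)(\hat x,q)\le\mathbf L(\|V\|_\infty-l\delta)\qquad\forall(\hat x,q)\in I.$$ In particular, if $\delta>0$ then $(\mathbf T^\mu_\delta)^l(V)(\hat x,q)=0$ for all $(\hat x,q)\in I$ and all $l\ge1/\delta$.
   Context: A gMDP $\widehat{\mathbf M}=(\hat{\mathbb X},\hat{\mathbb U},\mathbb Y,\hat x_0,\hat{\mathbf t},\hat h)$: Polish state/input spaces, metric output space $\mathbb Y$, kernel $\hat{\mathbf t}(\cdot\mid\hat x,\hat u)$, measurable output map $\hat h$. $\Sigma=2^{\mathsf{AP}}$, $\mathsf L:\mathbb Y\to\Sigma$ measurable labelling; $\mathcal A_\psi$ a DFA (accepting set $F$, transition $\tau$) for an scLTL formula $\psi$. Product $\widehat{\mathbf M}\otimes\mathcal A_\psi$: states $\hat{\mathbb X}\times Q$, inputs $\hat{\mathbb U}$, kernel $\bar{\mathbf t}(d\hat x'\times\{q'\}\mid\hat x,q,u)=\mathbf 1_{\{q'\}}(\tau(q,\mathsf L(\hat h(\hat x'))))\hat{\mathbf t}(d\hat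 x'\mid\hat x,u)$. Stationary Markov policy: universally measurable $\mu:\hat{\mathbb X}\times Q\to\mathcal P(\hat{\mathbb U})$ used at every step. $\mathbf T^\mu(V)(\hat x,q)=\int\max\{\mathbf 1_F(q'),V(\hat x',q')\}\bar{\mathbf t}(d\hat x'\times\{q'\}\mid\hat x,q,\mu(\hat x,q))$, $\mathbf T^\mu_\delta(V)=\mathbf L(\mathbf T^\mu(V)-\delta)$ with $\mathbf L(r)=\min(1,\max(0,r))$; $\|V\|_\infty=\sup|V|$. An absorbing set for $\mu$ is $I\subseteq\hat{\mathbb X}\times(Q\setminus F)$ such that, under $\mu$, $\mathbb P[(\hat x_{t+1},q_{t+1})\in I\mid(\hat x_t,q_t)]=1$ for all $(\hat x_t,q_t)\in I$. *)

From HB Require Import structures.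
From mathcomp Require Import all_boot all_order all_algebra.
From mathcomp Require Import all_classical all_reals all_analysis measurable_realfun.
Set Implicit Arguments. Unset Strict Implicit. Unset Printing Implicit Defensive.
Import Order.TTheory GRing.Theory Num.Theory.
Import numFieldNormedType.Exports.
Local Open Scope classical_set_scope.
Local Open Scope ring_scope.

Definition Lsat (R : realType) (r : R) : R := Num.min 1 (Num.max 0 r).

(* DFA state reached from q after the product moves to x':
   q' = tau(q, L(h(x'))).  Alphabet Sigma = 2^AP = {set AP}. *)
Definition next_q {X Y : Type} {AP Q : finType}
  (tau : Q -> {set AP} -> Q) (Lab : Y -> {set AP}) (h : X -> Y)
  (q : Q) (x' : X) : Q := tau q (Lab (h x')).

Definition Tmu {d1 d2} {X : measurableType d1} {U : measurableType d2}
  {R : realType} {Y : Type} {AP Q : finType}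
  (t : X -> U -> probability X R) (mu : X -> Q -> probability U R)
  (tau : Q -> {set AP} -> Q) (Lab : Y -> {set AP}) (h : X -> Y)
  (F : {set Q}) (V : X -> Q -> R) : X -> Q -> R :=
  fun x q => fine (\int[mu x q]_u \int[t x u]_x'
      (Num.max ((next_q tau Lab h q x' \in F)%:R)
               (V x' (next_q tau Lab h q x')))%:E)%E.

Definition Tmu_delta {d1 d2} {X : measurableType d1} {U : measurableType d2}
  {R : realType} {Y : Type} {AP Q : finType}
  (t : X -> U -> probability X R) (mu : X -> Q -> probability U R)
  (tau : Q -> {set AP} -> Q) (Lab : Y -> {set AP}) (h : X -> Y)
  (F : {set Q}) (delta : R) (V : X -> Q -> R) : X -> Q -> R :=
  fun x q => Lsat (Tmu t mu tau Lab h F V x q - delta).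

Definition supnorm {X Q : Type} {R : realType} (V : X -> Q -> R) : R :=
  sup (range (fun p : X * Q => `|V p.1 p.2|)).

(* I is an absorbing set for mu: I is contained in X x (Q \ F), and from
   every (x,q) in I the next product state lies in I with probability 1,
   i.e. int_u t(A_q | x,u) mu(du|x,q) = 1 where
   A_q = {x' | (x', tau(q, L(h x'))) in I} (required measurable so that the
   probability is defined). *)
Definition absorbing {d1 d2} {X : measurableType d1} {U : measurableType d2}
  {R : realType} {Y : Type} {AP Q : finType}
  (t : X -> U -> probability X R) (mu : X -> Q -> probability U R)
  (tau : Q -> {set AP} -> Q) (Lab : Y -> {set AP}) (h : X -> Y)
  (F : {set Q}) (I : set (X * Q)) : Prop :=
  [/\ forall p, I p -> p.2 \notin F,
      forall q, measurable [set x' | I (x', next_q tau Lab h q x')]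
    & forall x q, I (x, q) ->
        (\int[mu x q]_u (t x u [set x' | I (x', next_q tau Lab h q x')]) = 1)%E].

From HB Require Import structures.
From mathcomp Require Import all_boot all_order all_algebra.
From mathcomp Require Import all_classical all_reals all_analysis measurable_realfun.
From mathcomp Require Import lra.
Import Order.TTheory GRing.Theory Num.Theory.
Import numFieldNormedType.Exports.
Local Open Scope classical_set_scope.
Local Open Scope ring_scope.

(* From a state of the absorbing set [I] the successor stays in [I] almost
   surely, and no state of [I] is accepting, so the integrand of [T^mu] is
   bounded by the bound [c] of [V] on [I] outside a null set, where it is at
   most [1]; hence [T^mu V <= c] on [I].  Each application of [T^mu_delta]
   thus lowers the bound on [I] by [delta], and starting from [c = ||V||]
   induction on [l] gives [L(||V|| - l delta)]. *)

Section saturation.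
Context {R : realType}.
Implicit Types r s d : R.

Lemma Lsat_ge0 r : 0 <= Lsat r.
Proof. by rewrite /Lsat le_min ler01 le_max lexx. Qed.

Lemma Lsat_le1 r : Lsat r <= 1.
Proof. by rewrite /Lsat ge_min lexx. Qed.

Lemma Lsat_id r : 0 <= r <= 1 -> Lsat r = r.
Proof. by case/andP=> r0 r1; rewrite /Lsat max_r // min_r. Qed.

Lemma ler0_Lsat r : r <= 0 -> Lsat r = 0.
Proof. by move=> r0; rewrite /Lsat max_l // min_r. Qed.

Lemma le_Lsat r s : r <= s -> Lsat r <= Lsat s.
Proof.
move=> rs; rewrite /Lsat le_min !ge_min lexx /=; apply/orP; right.
by rewrite ge_max !le_max lexx rs orbT.
Qed.

Lemma Lsat_subr_Lsat r d : 0 <= d -> Lsat (Lsat r - d) <= Lsat (r - d).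
Proof.
move=> d0; have [r0|r_gt0] := lerP r 0.
  by rewrite (ler0_Lsat _ r0) sub0r ler0_Lsat ?Lsat_ge0 // oppr_le0.
apply: le_Lsat; rewrite lerD2r /Lsat ge_min max_r ?lexx ?orbT //.
exact: ltW.
Qed.

End saturation.

Section integral_lemmas.
Local Open Scope ereal_scope.
Context {d : measure_display} {T : measurableType d} {R : realType}.

(* Unlike [ge0_le_integral], no measurability is needed: the integral of a
   nonnegative function is a supremum over its simple minorants. *)
Lemma ge0_le_integralT (mu : {measure set T -> \bar R}) (f g : T -> \bar R) :
  (forall x, 0 <= f x) -> (forall x, f x <= g x) ->
  \int[mu]_x f x <= \int[mu]_x g x.
Proof.
move=> f0 fg; have g0 x : 0 <= g x by exact: le_trans (f0 x) (fg x).
rewrite (ge0_integralTE mu f0) (ge0_integralTE mu g0).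
by apply: ereal_sup_le => _ [s sf <-]; exists s => // x; exact: le_trans (sf x) (fg x).
Qed.

Lemma integral_cst_probability (P : probability T R) (c : R) :
  \int[P]_x c%:E = c%:E.
Proof.
by rewrite (integral_cst P measurableT) [X in _ * X]probability_setT mule1.
Qed.

Lemma ge0_integral_affine (P : probability T R) (f : T -> \bar R) (a c : R) :
  measurable_fun [set: T] f -> (forall x, 0 <= f x) -> (0 <= a)%R -> (0 <= c)%R ->
  \int[P]_x (a%:E * f x + c%:E) = a%:E * \int[P]_x f x + c%:E.
Proof.
move=> mf f0 a0 c0.
rewrite ge0_integralD //; last 2 first.
- by move=> x _; rewrite mule_ge0.
- exact: measurable_funeM.
by rewrite ge0_integralZl // integral_cst_probability.
Qed.

Lemma integral_kernel_setC {d'} {X : measurableType d'} {P : probability T R}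
    {k : T -> probability X R} {A : set X} :
  measurable A -> measurable_fun [set: T] (fun u => k u A) ->
  measurable_fun [set: T] (fun u => k u (~` A)) ->
  \int[P]_u k u A = 1 -> \int[P]_u k u (~` A) = 0.
Proof.
move=> mA mkA mkAC kA1.
have : \int[P]_u (k u A + k u (~` A)) = 1.
  rewrite -(integral_cst_probability P 1); apply: eq_integral => u _.
  rewrite -measureU //; [|exact: measurableC|exact/subsets_disjoint].
  by rewrite setUv [LHS]probability_setT.
rewrite ge0_integralD // kA1.
have : 0 <= \int[P]_u k u (~` A) by exact: integral_ge0.
case: (\int[P]_u k u (~` A)) => // r r0.
by rewrite -EFinD => /eqP; rewrite eqe => /eqP r_eq0; congr EFin; lra.
Qed.

End integral_lemmas.

Section absorbing_set.
Context {d1 d2 : measure_display} {X : measurableType d1} {U : measurableType d2}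
  {R : realType} {Y : Type} {AP Q : finType}.
Variables (t : X -> U -> probability X R) (mu : X -> Q -> probability U R)
  (tau : Q -> {set AP} -> Q) (Lab : Y -> {set AP}) (h : X -> Y) (F : {set Q})
  (I : set (X * Q)).
Hypothesis t_kernel : forall x A, measurable A ->
  measurable_fun [set: U] ((fun u => t x u A) : U -> \bar R).
Hypothesis hI : absorbing t mu tau Lab h F I.

Let stay q := [set x' | I (x', next_q tau Lab h q x')].
Let payoff (W : X -> Q -> R) q x' : R :=
  Num.max ((next_q tau Lab h q x' \in F)%:R) (W x' (next_q tau Lab h q x')).

Lemma absorbing_integrand_le (W : X -> Q -> R) (c : R) q x' :
  (forall x q, 0 <= W x q <= 1) -> (forall x q, I (x, q) -> W x q <= c) ->
  payoff W q x' <= (1 - c) * \1_(~` stay q) x' + c.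
Proof.
case: hI => IF _ _ W01 WI; rewrite /payoff indicE in_setC.
have /andP[W0 W1] := W01 x' (next_q tau Lab h q x').
have [Ix'|nIx'] := pselect (stay q x').
  rewrite mem_set //= mulr0 add0r ge_max (negbTE (IF _ Ix')) WI // andbT.
  exact: le_trans W0 (WI _ _ Ix').
by rewrite memNset //= mulr1 subrK ge_max lern1 leq_b1.
Qed.

Lemma absorbing_Tmu_le (W : X -> Q -> R) (c : R) x q :
  0 <= c <= 1 -> (forall x q, 0 <= W x q <= 1) ->
  (forall x q, I (x, q) -> W x q <= c) -> I (x, q) ->
  Tmu t mu tau Lab h F W x q <= c.
Proof.
case/andP=> c0 c1 W01 WI Ixq; case: (hI) => _ mstay absorb.
have mstayC : measurable (~` stay q) := measurableC (mstay q).
have onemc_ge0 : 0 <= 1 - c by rewrite subr_ge0.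
have inner u : (\int[t x u]_x' (payoff W q x')%:E
    <= (1 - c)%:E * t x u (~` stay q) + c%:E)%E.
  rewrite -[~` stay q]setIT -integral_indic // -ge0_integral_affine //; last first.
    exact/measurable_EFinP/measurable_indic.
  apply: ge0_le_integralT => x'; rewrite lee_fin.
    by rewrite /payoff le_max ler0n.
  exact: absorbing_integrand_le.
have escape := integral_kernel_setC (mstay q) (t_kernel x _ (mstay q))
  (t_kernel x _ mstayC) (absorb _ _ Ixq).
have outer : (\int[mu x q]_u \int[t x u]_x' (payoff W q x')%:E <= c%:E)%E.
  have -> : c%:E = (\int[mu x q]_u ((1 - c)%:E * t x u (~` stay q) + c%:E))%E.
    by rewrite ge0_integral_affine ?escape ?mule0 ?add0e //; exact: t_kernel.
  apply: ge0_le_integralT inner => u.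
  by apply: integral_ge0 => x' _; rewrite lee_fin /payoff le_max ler0n.
by rewrite /Tmu; move: outer; case: (\int[_]_u _)%E => [r||] //=; rewrite lee_fin.
Qed.

Variable delta : R.
Hypothesis delta_ge0 : 0 <= delta.
Let T_delta := Tmu_delta t mu tau Lab h F delta.

Lemma iter_Tmu_delta_itv (V : X -> Q -> R) l x q :
  (forall x q, 0 <= V x q <= 1) -> 0 <= iter l T_delta V x q <= 1.
Proof. by case: l => [|l] V01 /=; rewrite ?V01 // Lsat_ge0 Lsat_le1. Qed.

Lemma iter_Tmu_delta_le (V : X -> Q -> R) (s : R) l x q :
  (forall x q, 0 <= V x q <= 1) -> (forall x q, V x q <= s) -> I (x, q) ->
  iter l T_delta V x q <= Lsat (s - l%:R * delta).
Proof.
move=> V01 Vs; elim: l x q => [|l IH] x q Ixq /=.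
  by rewrite mul0r subr0 -[V x q]Lsat_id ?V01 // le_Lsat.
have TW : Tmu t mu tau Lab h F (iter l T_delta V) x q <= Lsat (s - l%:R * delta).
  apply: absorbing_Tmu_le IH Ixq; first by rewrite Lsat_ge0 Lsat_le1.
  by move=> ? ?; exact: iter_Tmu_delta_itv.
apply: le_trans (le_Lsat _ _ (lerB TW (lexx delta))) _.
apply: le_trans (Lsat_subr_Lsat _ _ delta_ge0) (le_Lsat _ _ _).
by rewrite -addn1 natrD mulrDl mul1r opprD addrA.
Qed.

End absorbing_set.

Section supnorm.
Context {X Q : Type} {R : realType} {V : X -> Q -> R} {b : R}.
Hypothesis V_le : forall x q, `|V x q| <= b.

Lemma ler_supnorm x q : V x q <= supnorm V.
Proof.
apply: le_trans (ler_norm _) _; apply: ub_le_sup; last by exists (x, q).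
by exists b => _ [p _ <-].
Qed.

Lemma supnorm_le (x : X) (q : Q) : supnorm V <= b.
Proof. by apply: ge_sup; [exists `|V x q|, (x, q) | move=> _ [p _ <-]]. Qed.

End supnorm.

Theorem proposition7
  (d1 d2 : measure_display) (X : measurableType d1) (U : measurableType d2)
  (R : realType) (Y : Type) (AP Q : finType)
  (t : X -> U -> probability X R)
  (t_kernel : forall x A, measurable A ->
      measurable_fun [set: U] ((fun u => t x u A) : U -> \bar R))
  (h : X -> Y) (Lab : Y -> {set AP})
  (q0 : Q) (F : {set Q}) (tau : Q -> {set AP} -> Q)
  (delta : R) (hdelta : 0 <= delta)
  (mu : X -> Q -> probability U R)
  (I : set (X * Q)) (hI : absorbing t mu tau Lab h F I)
  (V : X -> Q -> R) (hV : forall x q, 0 <= V x q <= 1) :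
  (forall l : nat, (1 <= l)%N -> forall x q, I (x, q) ->
      0 <= iter l (Tmu_delta t mu tau Lab h F delta) V x q <=
           Lsat (supnorm V - l%:R * delta))
  /\
  (0 < delta -> forall l : nat, delta^-1 <= l%:R -> forall x q, I (x, q) ->
      iter l (Tmu_delta t mu tau Lab h F delta) V x q = 0).
Proof.
have V_le1 x q : `|V x q| <= 1 by rewrite ger0_norm; case/andP: (hV x q).
have itv l x q : 0 <= iter l (Tmu_delta t mu tau Lab h F delta) V x q <= 1.
  exact: iter_Tmu_delta_itv.
have bound l x q : I (x, q) -> iter l (Tmu_delta t mu tau Lab h F delta) V x q
    <= Lsat (supnorm V - l%:R * delta).
  by apply: iter_Tmu_delta_le => // ? ?; exact: ler_supnorm V_le1 _ _.
split=> [l _ x q Ixq | delta_gt0 l l_ge x q Ixq].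
  by rewrite (andP (itv l x q)).1 bound.
apply/eqP; rewrite eq_le (andP (itv l x q)).1 andbT.
apply: le_trans (bound l x q Ixq) _; rewrite ler0_Lsat // subr_le0.
by rewrite (le_trans (supnorm_le V_le1 x q)) // -ler_pdivrMr // div1r.
Qed.
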